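(* Let $\mu$ be a Borel probability measure on $\mathbb{R}^m$ and let $\nu=\sum_{i=1}^k a_i\delta_{x_i}$ with $k\in\mathbb{N}$, $x_i\in\mathbb{R}^m$, $a_i>0$, $\sum_{i=1}^k a_i=1$. Then $D_0(\mu*\nu)=D_0(\mu)$.
   Context: $\delta_x$ is the Dirac measure at $x$. The convolution $\mu*\nu$ is the push-forward of $\mu\times\nu$ under $(x,y)\mapsto x+y$. For a finite Borel measure $\lambda$, $e_n(\lambda)=\exp\inf\{\int\log d(x,A)\,d\lambda(x):A\subset\mathbb{R}^m,\ \mathrm{Card}(A)\le n\}$ and the quantization dimension of order zero is $D_0(\lambda)=\lim_{n\to\infty}\frac{\log n}{-\log e_n(\lambda)}$; throughout it is assumed that these quantization dimensions exist whenever they occur. *)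

From HB Require Import structures.
From mathcomp Require Import all_boot all_order all_algebra.
From mathcomp Require Import all_classical all_reals all_analysis.
Set Implicit Arguments. Unset Strict Implicit. Unset Printing Implicit Defensive.
Import Order.TTheory GRing.Theory Num.Theory.
Local Open Scope ring_scope.
Local Open Scope classical_set_scope.

(* R^m is represented by m.-tuple R, which mathcomp-analysis equips with the
   product sigma-algebra of the Borel sigma-algebras on R (= Borel sets of R^m). *)

Section QuantDefs.
Context (R : realType) (m : nat).

Definition vadd (x y : m.-tuple R) : m.-tuple R :=
  [tuple tnth x i + tnth y i | i < m].

Definition edist (x y : m.-tuple R) : R :=
  Num.sqrt (\sum_(i < m) (tnth x i - tnth y i) ^+ 2).

(* d(x, A) for a finite set A given by an enumeration; d(x, empty) = +oo *)
Definition dist_set (x : m.-tuple R) (A : seq (m.-tuple R)) : \bar R :=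
  \big[Order.min/+oo%E]_(a <- A) (edist x a)%:E.

Definition elog (z : \bar R) : \bar R :=
  match z with
  | r%:E => if r == 0 then -oo%E else (ln r)%:E
  | +oo%E => +oo%E
  | -oo%E => -oo%E
  end.

Definition log_en (lam : set (m.-tuple R) -> \bar R) (n : nat) : \bar R :=
  ereal_inf [set (\int[lam]_x elog (dist_set x A))%E
            | A in [set A : seq (m.-tuple R) | (size A <= n)%N]].

Definition ratio (a : R) (b : \bar R) : \bar R :=
  match b with
  | r%:E => if r == 0 then +oo%E else (a / r)%:E
  | _ => 0%E
  end.

(* the sequence n |-> log n / (- log e_n(lam)), whose limit is D_0(lam) *)
Definition D0_seq (lam : set (m.-tuple R) -> \bar R) (n : nat) : \bar R :=
  ratio (ln n%:R) (- log_en lam n)%E.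

Definition convolution (mu nu : set (m.-tuple R) -> \bar R) : set (m.-tuple R) -> \bar R :=
  pushforward (mu \x nu)%E (fun p : m.-tuple R * m.-tuple R => vadd p.1 p.2).

Definition discrete_measure (k : nat) (a : 'I_k -> R) (x : 'I_k -> m.-tuple R)
  : set (m.-tuple R) -> \bar R :=
  fun B => (\sum_(i < k) (a i)%:E * \d_(x i) B)%E.

End QuantDefs.

From Pilot Require Import Defs.
From HB Require Import structures.
From mathcomp Require Import all_boot all_order all_algebra.
From mathcomp Require Import all_classical all_reals all_analysis.
From mathcomp Require Import measurable_realfun.
Set Implicit Arguments. Unset Strict Implicit. Unset Printing Implicit Defensive.
Import Order.TTheory GRing.Theory Num.Theory.
Import numFieldNormedType.Exports.
Local Open Scope classical_set_scope.
Local Open Scope ring_scope.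

(* Convolving with nu turns mu into the mixture lambda = sum_i a_i mu(. - x_i).
   For a codebook A, the integral of log d(., A) against lambda is therefore
   the convex combination of the mu-integrals of log d(., A - x_i), whence
   log e_n(mu) <= log e_n(lambda).  Conversely the k n points A + x_i serve
   all the translates at once, whence log e_(kn)(lambda) <= log e_n(mu).
   Both sequences are nonincreasing and log (k n) / log n -> 1, so the ratios
   log n / (- log e_n) have the same limit. *)

Section translation.
Context (R : realType) (m : nat).
Local Notation T := (m.-tuple R).

Definition vsub (x y : T) : T := [tuple tnth x i - tnth y i | i < m].

Lemma measurable_vaddr (z : T) : measurable_fun [set: T] (fun y => vadd y z).
Proof.
apply/measurable_fun_tnthP => i.
rewrite (_ : _ \o _ = (fun y : T => tnth y i) \+ cst (tnth z i)).
  by apply: measurable_funD => //; exact: measurable_tnth.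
by apply/funext => y /=; rewrite tnth_mktuple.
Qed.

Lemma edist_vaddl (y z a : T) : Defs.edist (vadd y z) a = Defs.edist y (vsub a z).
Proof.
rewrite /Defs.edist; congr Num.sqrt; apply: eq_bigr => i _.
by rewrite !tnth_mktuple opprB addrA.
Qed.

Lemma edist_vadd2r (y a z : T) : Defs.edist (vadd y z) (vadd a z) = Defs.edist y a.
Proof.
rewrite /Defs.edist; congr Num.sqrt; apply: eq_bigr => i _.
by rewrite !tnth_mktuple opprD addrACA subrr addr0.
Qed.

Lemma measurable_edistl (a : T) : measurable_fun [set: T] (fun y => Defs.edist y a).
Proof.
apply: measurableT_comp.
  by apply: continuous_measurable_fun; exact: sqrt_continuous.
apply: measurable_sum => i; apply: measurable_funX.
by apply: measurable_funB => //; exact: measurable_tnth.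
Qed.

Local Open Scope ereal_scope.

Lemma dist_set_cons (y a : T) A :
  dist_set y (a :: A) = Order.min (Defs.edist y a)%:E (dist_set y A).
Proof. by rewrite /dist_set big_cons. Qed.

Lemma dist_set_ge0 (y : T) A : 0 <= dist_set y A.
Proof. by apply: le_bigmin => [|a _]; rewrite ?leey ?lee_fin ?sqrtr_ge0. Qed.

Lemma dist_set_le_edist (y a : T) A : a \in A -> dist_set y A <= (Defs.edist y a)%:E.
Proof. by move=> aA; rewrite /dist_set; exact: ge_bigmin_seq. Qed.

Lemma le_dist_set (y : T) A c :
  (forall a, a \in A -> c <= (Defs.edist y a)%:E) -> c <= dist_set y A.
Proof. by move=> cA; rewrite /dist_set big_seq; apply: le_bigmin => //; exact: leey. Qed.

Lemma dist_set_vaddl (y z : T) A :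
  dist_set (vadd y z) A = dist_set y (map (fun a => vsub a z) A).
Proof. by rewrite /dist_set big_map; apply: eq_bigr => a _; rewrite edist_vaddl. Qed.

Lemma dist_set_vaddl_le (y z : T) A A' :
  {subset map (fun b => vadd b z) A <= A'} -> dist_set (vadd y z) A' <= dist_set y A.
Proof.
move=> AA'; apply: le_dist_set => b bA; rewrite -(edist_vadd2r y b z).
by apply/dist_set_le_edist/AA'/map_f.
Qed.

End translation.

Section elog.
Context (R : realType).
Local Open Scope ereal_scope.

Lemma elog_le (u v : \bar R) : 0 <= u -> u <= v -> elog u <= elog v.
Proof.
move=> u0 uv; case: v uv => [s| |] uv; last 2 first.
- by rewrite leey.
- by move: (le_trans u0 uv); rewrite leeNy_eq.
case: u u0 uv => [r| |] u0 uv; last 2 first.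
- by rewrite leye_eq in uv.
- by rewrite leeNy_eq in u0.
rewrite !lee_fin in u0 uv; rewrite /=.
have [_|r_neq0] := eqVneq r 0%R; first by rewrite leNye.
have r_gt0 : (0 < r)%R by rewrite lt0r r_neq0.
have s_gt0 : (0 < s)%R := lt_le_trans r_gt0 uv.
by rewrite gt_eqF // lee_fin ler_ln // posrE.
Qed.

Lemma elog_min (u v : \bar R) : 0 <= u -> 0 <= v ->
  elog (Order.min u v) = Order.min (elog u) (elog v).
Proof.
move=> u0 v0; have [uv|/ltW vu] := leP u v.
  by rewrite !min_l // elog_le.
by rewrite !min_r // elog_le.
Qed.

End elog.

Lemma measurable_elog_dist_set (R : realType) (m : nat) (A : seq (m.-tuple R)) :
  measurable_fun [set: m.-tuple R] (fun y => elog (dist_set y A)).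
Proof.
elim: A => [|a A ih].
  by under eq_fun do rewrite /dist_set big_nil; exact: measurable_cst.
under eq_fun do rewrite dist_set_cons elog_min ?lee_fin ?sqrtr_ge0 ?dist_set_ge0 //.
apply: measurable_mine => //; apply: measurable_fun_ifT.
- by apply: measurable_fun_eqr; [exact: measurable_edistl|exact: measurable_cst].
- exact: measurable_cst.
- apply/measurable_EFinP; apply: measurableT_comp; first exact: measurable_ln.
  exact: measurable_edistl.
Qed.

Section integral_measurable.
Context d (T : measurableType d) (R : realType).
Import HBNNSimple.

Lemma eq_setfun_integral (m1 m2 : set T -> \bar R) (f : T -> \bar R) :
  (forall A, measurable A -> m1 A = m2 A) -> (\int[m1]_x f x = \int[m2]_x f x)%E.
Proof.
move=> m12; rewrite /integral; congr (ereal_sup _ - ereal_sup _)%E;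
  apply: eq_imagel => h _; apply: eq_fsbigr => r _; rewrite m12 //;
  exact: measurable_funPTI.
Qed.

Lemma le_integral_measurable (mu : {measure set T -> \bar R}) (f g : T -> \bar R) :
  measurable_fun [set: T] f -> measurable_fun [set: T] g ->
  (forall y, f y <= g y)%E -> (\int[mu]_y f y <= \int[mu]_y g y)%E.
Proof.
move=> mf mg fg; rewrite integralE [leRHS]integralE.
apply: leeB; apply: (ge0_le_integral mu measurableT).
- by move=> y _; exact: funepos_ge0.
- exact: measurable_funepos.
- exact: measurable_funepos.
- by move=> y _; apply: (@funepos_le _ _ setT) => //; rewrite inE.
- by move=> y _; exact: funeneg_ge0.
- exact: measurable_funeneg.
- exact: measurable_funeneg.
- by move=> y _; apply: (@funeneg_le _ _ setT) => //; rewrite inE.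
Qed.

End integral_measurable.

Section weighted_sum.
Context (R : realType) (k : nat) (a : 'I_k -> R).
Hypothesis a_gt0 : forall i, (0 < a i)%R.
Local Open Scope ereal_scope.

Let a_ge0 i : 0 <= (a i)%:E. Proof. by rewrite lee_fin; exact: ltW. Qed.

(* This also holds when some [N i] is +oo: both sides are then -oo. *)
Lemma sume_weightedB (P N : 'I_k -> \bar R) :
  (forall i, 0 <= P i) -> (forall i, 0 <= N i) ->
  \sum_i (a i)%:E * P i - \sum_i (a i)%:E * N i = \sum_i (a i)%:E * (P i - N i).
Proof.
move=> P0 N0; have aN0 i : 0 <= (a i)%:E * N i by exact: mule_ge0.
have [[j Nj]|N_fin] := pselect (exists j, N j = +oo).
  rewrite [X in _ - X](bigD1 j) //= [RHS](bigD1 j) //= Nj.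
  rewrite gt0_muley ?lte_fin // addye; last first.
    by rewrite -ltNye (lt_le_trans ltNy0) // sume_ge0.
  by rewrite /= !addeNy gt0_muleNy ?lte_fin ?addNye.
have {}N_fin i : N i \is a fin_num.
  by rewrite ge0_fin_numE // ltey; apply/eqP => Ni; apply: N_fin; exists i.
rewrite -fin_num_sumeN; last by move=> i _; rewrite fin_numM.
rewrite -big_split /=; apply: eq_bigr => i _.
by rewrite muleBr // fin_num_adde_defl // fin_numN.
Qed.

Hypothesis a_sum1 : (\sum_i a i = 1)%R.

Lemma sume_weighted_cst (L : \bar R) : \sum_i (a i)%:E * L = L.
Proof.
rewrite -ge0_sume_distrl; last by move=> i _; exact: a_ge0.
by rewrite sumEFin a_sum1 mul1e.
Qed.

Lemma sume_weighted_ge (L : \bar R) (I : 'I_k -> \bar R) :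
  (forall i, L <= I i) -> L <= \sum_i (a i)%:E * I i.
Proof.
move=> LI; rewrite -[leLHS]sume_weighted_cst; apply: lee_sum => i _.
exact: lee_wpmul2l.
Qed.

Lemma sume_weighted_le (U : \bar R) (I : 'I_k -> \bar R) :
  (forall i, I i <= U) -> \sum_i (a i)%:E * I i <= U.
Proof.
move=> IU; rewrite -[leRHS]sume_weighted_cst; apply: lee_sum => i _.
exact: lee_wpmul2l.
Qed.

End weighted_sum.

Section mixture_integral.
Context d d' (T : measurableType d) (U : measurableType d') (R : realType).
Variables (mu : {measure set T -> \bar R}) (k : nat) (a : 'I_k.+1 -> R).
Variables (phi : 'I_k.+1 -> T -> U) (lam : set U -> \bar R).
Local Open Scope ereal_scope.
Hypotheses (a_gt0 : forall i, (0 < a i)%R)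
  (mphi : forall i, measurable_fun [set: T] (phi i))
  (lamE : forall B, measurable B ->
     lam B = \sum_i (a i)%:E * mu (phi i @^-1` B)).

(* [msum] needs a [nat]-indexed family of measures, hence the [inord]s; the
   measure structure of a pushforward depends on the measurability proof. *)
Let component (n : nat) : {measure set U -> \bar R} :=
  mscale (NngNum (ltW (a_gt0 (inord n))))
    (measure_function_pushforward__canonical__measure_function_Measure mu
      (mphi (inord n))).

Let integral_lam_msum (h : U -> \bar R) :
  \int[lam]_y h y = \int[msum component k.+1]_y h y.
Proof.
apply: eq_setfun_integral => B mB; rewrite lamE //.
by apply: eq_bigr => i _; rewrite /component /mscale /= inord_val.
Qed.

Lemma ge0_integral_mixture (h : U -> \bar R) :
  measurable_fun [set: U] h -> (forall y, 0 <= h y) ->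
  \int[lam]_y h y = \sum_i (a i)%:E * \int[mu]_x h (phi i x).
Proof.
move=> mh h0; rewrite integral_lam_msum ge0_integral_measure_sum //.
apply: eq_bigr => i _; rewrite ge0_integral_mscale //= inord_val.
by rewrite ge0_integral_pushforward.
Qed.

Lemma integral_mixture (g : U -> \bar R) : measurable_fun [set: U] g ->
  \int[lam]_y g y = \sum_i (a i)%:E * \int[mu]_x g (phi i x).
Proof.
move=> mg; rewrite integral_lam_msum integralE -!integral_lam_msum.
rewrite (ge0_integral_mixture (measurable_funepos mg)); last first.
  by move=> y; exact: funepos_ge0.
rewrite (ge0_integral_mixture (measurable_funeneg mg)); last first.
  by move=> y; exact: funeneg_ge0.
rewrite (sume_weightedB a_gt0).
- apply: eq_bigr => i _; rewrite [in RHS]integralE.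
  by congr (_ * (_ - _)); apply: eq_integral => x _; rewrite ?funeposE ?funenegE.
- by move=> i; apply: integral_ge0 => x _; exact: funepos_ge0.
- by move=> i; apply: integral_ge0 => x _; exact: funeneg_ge0.
Qed.

End mixture_integral.

Section convolution_discrete.
Context (R : realType) (m k : nat) (mu : {measure set (m.-tuple R) -> \bar R}).
Variables (a : 'I_k -> R) (x : 'I_k -> m.-tuple R).
Hypothesis a_ge0 : forall i, (0 <= a i)%R.
Local Open Scope ereal_scope.

Lemma convolution_discrete_measureE B : measurable B ->
  convolution mu (discrete_measure a x) B =
  \sum_i (a i)%:E * mu ((fun y => vadd y (x i)) @^-1` B).
Proof.
move=> mB; have mBi i : measurable ((fun y => vadd y (x i)) @^-1` B).
  by rewrite -[X in measurable X]setTI; exact: measurable_vaddr.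
rewrite /convolution /pushforward /product_measure1.
transitivity (\int[mu]_y \sum_i (a i)%:E *
    (\1_((fun y => vadd y (x i)) @^-1` B) y)%:E).
  apply: eq_integral => y _; apply: eq_bigr => i _; congr (_ * _).
  rewrite /dirac !indicE; congr ((_ : bool)%:R)%:E.
  by apply/idP/idP; rewrite !inE /xsection /preimage /= ?inE.
rewrite ge0_integral_sum //; last 2 first.
- move=> i; apply: emeasurable_funM; first exact: measurable_cst.
  exact/measurable_EFinP/measurable_indic.
- by move=> i y _; rewrite mule_ge0 // lee_fin.
apply: eq_bigr => i _; rewrite ge0_integralZl_EFin //.
- by rewrite integral_indic // setIT.
all: by [move=> y _; rewrite lee_fin|exact/measurable_EFinP/measurable_indic].
Qed.

End convolution_discrete.

Lemma log_en_antitone (R : realType) (m : nat) (lam : set (m.-tuple R) -> \bar R) :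
  {homo log_en lam : n n' / (n <= n')%N >-> (n' <= n)%E}.
Proof.
move=> n n' nn'; apply: ereal_inf_le_tmp => _ [A A_n <-]; exists A => //.
exact: leq_trans A_n nn'.
Qed.

Section codebook.
Context (R : realType) (m k : nat) (mu : {measure set (m.-tuple R) -> \bar R}).
Variables (a : 'I_k.+1 -> R) (x : 'I_k.+1 -> m.-tuple R).
Hypotheses (a_gt0 : forall i, 0 < a i) (a_sum1 : \sum_i a i = 1).
Local Notation lam := (convolution mu (discrete_measure a x)).
Local Open Scope ereal_scope.

Let integral_convolution (A : seq (m.-tuple R)) :
  \int[lam]_y elog (dist_set y A) =
  \sum_i (a i)%:E * \int[mu]_y elog (dist_set (vadd y (x i)) A).
Proof.
apply: (integral_mixture a_gt0 (fun i => measurable_vaddr (x i))).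
- by move=> B mB; apply: convolution_discrete_measureE => // i; exact: ltW.
- exact: measurable_elog_dist_set.
Qed.

Lemma log_en_le_convolution n : log_en mu n <= log_en lam n.
Proof.
apply: le_ereal_inf_tmp => _ [A A_n <-]; rewrite integral_convolution.
apply: (sume_weighted_ge a_gt0 a_sum1) => i.
apply: ereal_inf_lbound; exists (map (fun b => vsub b (x i)) A).
  by rewrite /= size_map.
by apply: eq_integral => y _; rewrite dist_set_vaddl.
Qed.

Lemma log_en_convolution_le n : log_en lam (k.+1 * n) <= log_en mu n.
Proof.
apply: le_ereal_inf_tmp => _ [A A_n <-].
pose A' := [seq vadd b (x i) | i <- enum 'I_k.+1, b <- A].
apply: (@le_trans _ _ (\int[lam]_y elog (dist_set y A'))).
  apply: ereal_inf_lbound; exists A' => //.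
  by rewrite /= size_allpairs size_enum_ord leq_mul.
rewrite integral_convolution; apply: (sume_weighted_le a_gt0 a_sum1) => i.
apply: le_integral_measurable => [||y].
- exact: measurableT_comp (measurable_elog_dist_set A') (measurable_vaddr (x i)).
- exact: measurable_elog_dist_set.
apply: elog_le; first exact: dist_set_ge0.
apply: dist_set_vaddl_le => _ /mapP[b bA ->].
by apply/allpairsP; exists (i, b); rewrite mem_enum.
Qed.

End codebook.

Section ratio.
Context (R : realType).
Local Open Scope ereal_scope.

Lemma ratio_antitone (c : R) (b1 b2 : \bar R) : (0 <= c)%R -> b1 <= b2 ->
  0 <= b1 \/ b2 < 0 -> Defs.ratio c b2 <= Defs.ratio c b1.
Proof.
move=> c0 b12 [b1_ge0|b2_lt0].
- case: b1 b1_ge0 b12 => [r1| |] b1_ge0 b12; last 2 first.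
  + by move: b12; rewrite leye_eq => /eqP ->.
  + by rewrite leeNy_eq in b1_ge0.
  rewrite lee_fin in b1_ge0; rewrite /=.
  have [_|r1_neq0] := eqVneq r1 0%R; first exact: leey.
  have r1_gt0 : (0 < r1)%R by rewrite lt0r r1_neq0.
  case: b2 b12 => [r2| |] b12 /=; last 2 first.
  + by rewrite lee_fin divr_ge0 // ltW.
  + by rewrite leeNy_eq in b12.
  rewrite lee_fin in b12; have r2_gt0 := lt_le_trans r1_gt0 b12.
  by rewrite gt_eqF // lee_fin ler_wpM2l // lef_pV2 // posrE.
- case: b2 b2_lt0 b12 => [r2| |] b2_lt0 b12; last 2 first.
  + by move: b2_lt0; rewrite ltNge leey.
  + by move: b12; rewrite leeNy_eq => /eqP ->.
  rewrite lte_fin in b2_lt0; rewrite /= lt_eqF //.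
  case: b1 b12 => [r1| |] b12 /=; last 2 first.
  + by rewrite leye_eq in b12.
  + by rewrite lee_fin mulr_ge0_le0 // invr_le0 ltW.
  rewrite lee_fin in b12; have r1_lt0 := le_lt_trans b12 b2_lt0.
  by rewrite lt_eqF // lee_fin ler_wpM2l // lef_nV2 // negrE.
Qed.

Lemma ratioMr (c s : R) (b : \bar R) : (0 < s)%R ->
  Defs.ratio (c * s) b = Defs.ratio c b * s%:E.
Proof.
move=> s_gt0; case: b => [r| |] /=; last 2 first.
- by rewrite mul0e.
- by rewrite mul0e.
case: ifPn => _; first by rewrite gt0_mulye // lte_fin.
by rewrite -EFinM mulrAC.
Qed.

End ratio.

Section ln_nat.
Context (R : realType).

Lemma ln_nat_cvgy : (fun n : nat => ln (n%:R : R)) @ \oo --> +oo.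
Proof.
apply/cvgryPge => A; near=> n.
have An : (expR A <= n%:R :> R)%R by near: n; exact: nbhs_infty_ger.
have n_gt0 : (0 < n%:R :> R)%R := lt_le_trans (expR_gt0 A) An.
by rewrite -(ler_ln (expR_gt0 A) n_gt0) expRK in An.
Unshelve. all: end_near. Qed.

Lemma ln_mulnl_div_ln_cvg (K : nat) : (0 < K)%N ->
  (fun n : nat => ln ((K * n)%:R : R) / ln n%:R) @ \oo --> (1 : R).
Proof.
move=> K_gt0.
have lnV_cvg0 : (fun n : nat => (ln (n%:R : R))^-1) @ \oo --> (0 : R).
  apply/gtr0_cvgV0; last exact: ln_nat_cvgy.
  by near=> n; apply: ln_gt0; rewrite ltr1n; near: n; exact: nbhs_infty_gt.
apply: (@cvg_trans _ ((fun n : nat => 1 + ln (K%:R : R) * (ln (n%:R : R))^-1) @ \oo)).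
  apply: near_eq_cvg; near=> n.
  have n_gt1 : (1 < n)%N by near: n; exact: nbhs_infty_gt.
  have ln_n_gt0 : (0 < ln (n%:R : R))%R by apply: ln_gt0; rewrite ltr1n.
  rewrite natrM lnM ?posrE ?ltr0n ?(ltn_trans _ n_gt1) //.
  by rewrite mulrDl divff ?gt_eqF // addrC.
suff : (fun n : nat => 1 + ln (K%:R : R) * (ln (n%:R : R))^-1) @ \oo -->
    (1 + ln (K%:R : R) * 0 : R) by rewrite mulr0 addr0.
by apply: cvgD; [exact: cvg_cst|exact: cvgMl_tmp].
Unshelve. all: end_near. Qed.

End ln_nat.

Section ratio_limit.
Context (R : realType) (K : nat) (L1 L2 : nat -> \bar R).
Hypotheses (K_gt0 : (0 < K)%N)
  (L1_antitone : {homo L1 : n n' / (n <= n')%N >-> (n' <= n)%E})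
  (L2_antitone : {homo L2 : n n' / (n <= n')%N >-> (n' <= n)%E})
  (L1_le_L2 : forall n, (L1 n <= L2 n)%E)
  (L2_le_L1 : forall n, (L2 (K * n) <= L1 n)%E).
Local Open Scope ereal_scope.

Let D (L : nat -> \bar R) (n : nat) := Defs.ratio (ln (n%:R : R)) (- L n).
Let r (n : nat) := (ln ((K * n)%:R : R) / ln (n%:R : R))%R.

Let D_le n : (0 < n)%N -> L2 n <= 0 \/ 0 < L1 n -> D L1 n <= D L2 n.
Proof.
move=> n_gt0 L; apply: ratio_antitone.
- by apply: ln_ge0; rewrite ler1n.
- by rewrite leeN2.
- by rewrite oppe_ge0 oppe_lt0.
Qed.

Let D_mulnl_le n : (1 < n)%N -> L1 n <= 0 \/ 0 < L2 (K * n) ->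
  D L2 (K * n) <= D L1 n * (r n)%:E.
Proof.
move=> n_gt1 L.
have ln_n_gt0 : (0 < ln (n%:R : R))%R by apply: ln_gt0; rewrite ltr1n.
have lnK_gt0 : (0 < ln ((K * n)%:R : R))%R.
  by apply: ln_gt0; rewrite ltr1n (leq_trans n_gt1) // leq_pmull.
rewrite /D -ratioMr ?divr_gt0 // /r mulrC divfK ?gt_eqF //.
apply: ratio_antitone; first exact: ltW.
- by rewrite leeN2.
- by rewrite oppe_ge0 oppe_lt0.
Qed.

(* [ratio c] is antitone only on [0, +oo] and on ]-oo, 0[, hence the case
   split on the sign of L1. *)
Let D_le_near :
  \forall n \near \oo, D L1 n <= D L2 n /\ D L2 (K * n) <= D L1 n * (r n)%:E.
Proof.
have [[n0 L1n0_le0]|L1_gt0] := pselect (exists n0, L1 n0 <= 0).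
  near=> n.
  have n_gt1 : (1 < n)%N by near: n; exact: nbhs_infty_gt.
  have Kn0_le_n : (K * n0 <= n)%N by near: n; exact: nbhs_infty_ge.
  have n0_le_n : (n0 <= n)%N by rewrite (leq_trans _ Kn0_le_n) // leq_pmull.
  split.
  - apply: D_le; [exact: ltnW|left].
    exact: le_trans (L2_antitone Kn0_le_n) (le_trans (L2_le_L1 n0) L1n0_le0).
  - by apply: D_mulnl_le => //; left; exact: le_trans (L1_antitone n0_le_n) L1n0_le0.
have {}L1_gt0 n : 0 < L1 n.
  by rewrite ltNge; apply/negP => L1n_le0; apply: L1_gt0; exists n.
near=> n.
have n_gt1 : (1 < n)%N by near: n; exact: nbhs_infty_gt.
split.
- by apply: D_le; [exact: ltnW|right; exact: L1_gt0].
- apply: D_mulnl_le => //; right.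
  exact: lt_le_trans (L1_gt0 _) (L1_le_L2 _).
Unshelve. all: end_near. Qed.

Lemma lim_ln_ratio_eq : cvgn (D L1) -> cvgn (D L2) -> limn (D L2) = limn (D L1).
Proof.
move=> cvg1 cvg2; apply/eqP; rewrite eq_le; apply/andP; split; last first.
  by apply: lee_lim => //; apply: filterS D_le_near => n [].
have cvg2K : (D L2 \o muln K) @ \oo --> limn (D L2).
  exact: cvg_comp _ _ (@cvg_mulnl K K_gt0) cvg2.
have r_cvg : (fun n => (r n)%:E) @ \oo --> 1%:E.
  by apply: cvg_EFin; [exact: nearW|exact: ln_mulnl_div_ln_cvg].
have cvg1r : (fun n => D L1 n * (r n)%:E) @ \oo --> limn (D L1) * 1%:E.
  apply: cvgeM => //.
  have [D1_fin|D1_infty] := boolP (limn (D L1) \is a fin_num).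
    exact: mule_def_fin.
  exact: mule_def_infty_neq0.
rewrite -(cvg_lim _ cvg2K) // -[leRHS]mule1 -(cvg_lim _ cvg1r) //.
apply: lee_lim; [exact: cvgP cvg2K|exact: cvgP cvg1r|].
by apply: filterS D_le_near => n [].
Qed.

End ratio_limit.

Theorem lemma3p10 (R : realType) (m : nat)
  (mu : probability (m.-tuple R) R)
  (k : nat) (x : 'I_k -> m.-tuple R) (a : 'I_k -> R)
  (ha : forall i, 0 < a i) (hsum : \sum_(i < k) a i = 1)
  (hD0mu : cvgn (D0_seq mu))
  (hD0conv : cvgn (D0_seq (convolution mu (discrete_measure a x)))) :
  limn (D0_seq (convolution mu (discrete_measure a x))) = limn (D0_seq mu).
Proof.
case: k x a ha hsum hD0conv => [|k] x a ha hsum hD0conv.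
  by move: hsum; rewrite big_ord0 => /eqP; rewrite eq_sym oner_eq0.
apply: (lim_ln_ratio_eq (K := k.+1)) => //.
- exact: log_en_antitone.
- exact: log_en_antitone.
- exact: log_en_le_convolution.
- exact: log_en_convolution_le.
Qed.
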